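(* Let $n\ge 1$, $D\ge 1$, and let $X_n=\{\mathbf{x}^0,\ldots,\mathbf{x}^{n-1}\}\subseteq\{0,1\}^D$ consist of $n$ pairwise distinct vectors. Then there is a three-layer Boolean threshold network with $D$ input nodes, $D^2$ hidden nodes and $2\lceil\log_2 n\rceil$ output nodes whose computed map $\mathbf{f}:\{0,1\}^D\to\{0,1\}^{2\lceil\log_2 n\rceil}$ satisfies $\mathbf{f}(\mathbf{x}^i)\ne\mathbf{f}(\mathbf{x}^j)$ for all $i\neq j$.
   Context: A Boolean threshold function is a map $\{0,1\}^h\to\{0,1\}$ of the form $\mathbf{u}\mapsto[\mathbf{a}\cdot\mathbf{u}\ge\theta]$ (value $1$ iff $\mathbf{a}\cdot\mathbf{u}\ge\theta$) with $\mathbf{a}\in\mathbb{Z}^h$, $\theta\in\mathbb{Z}$. An $L$-layer Boolean threshold network has layers $1,\ldots,L$ of given sizes; layer $1$ is the input; for $t=1,\ldots,L-1$, each node of layer $t+1$ takes as value a Boolean threshold function of the vector of values of layer $t$. The network computes the map from the input vector to the vector of values of layer $L$. Layers $2,\ldots,L-1$ are hidden layers. *)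

From mathcomp Require Import all_boot all_order all_algebra.
Set Implicit Arguments. Unset Strict Implicit. Unset Printing Implicit Defensive.
Import GRing.Theory Num.Theory.
Local Open Scope ring_scope.

Record thr_fun (h : nat) := ThrFun { thr_w : 'I_h -> int; thr_th : int }.

Definition eval_thr (h : nat) (g : thr_fun h) (u : {ffun 'I_h -> bool}) : bool :=
  thr_th g <= \sum_(i < h) thr_w g i * (u i)%:R.

Definition layer (h m : nat) := 'I_m -> thr_fun h.

Definition eval_layer (h m : nat) (L : layer h m) (u : {ffun 'I_h -> bool})
  : {ffun 'I_m -> bool} := [ffun j => eval_thr (L j) u].

Record net3 (d hid out : nat) := Net3 { net_hidden : layer d hid; net_out : layer hid out }.

Definition net3_map (d hid out : nat) (N : net3 d hid out) (x : {ffun 'I_d -> bool})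
  : {ffun 'I_out -> bool} := eval_layer (net_out N) (eval_layer (net_hidden N) x).

(* ceil(log2 n) for n >= 1 : smallest e with n <= 2^e. *)
Definition ceil_log2 (n : nat) : nat := up_log 2 n.

From mathcomp Require Import all_boot all_order all_algebra.
Set Implicit Arguments. Unset Strict Implicit. Unset Printing Implicit Defensive.
Import GRing.Theory Num.Theory.

(* For a, x in {0,1}^D let s = <a, x> <= D.  The D threshold gates [s >= t+1],
   t < D, feed an output gate with weights (-1)^t: the alternating sum of these
   bits is odd s, so the output gate [sum >= 1] computes the parity of <a, x>.
   With D blocks of D hidden gates the network outputs D such parities.
   For x != y exactly half of all a give <a, x> and <a, y> different parities
   (flipping a coordinate where x and y differ swaps the two halves), so some a
   separates at least half of any set of pairs of distinct vectors; choosing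
   such a greedily, 2 ceil(log2 n) parities separate all < n^2 ordered pairs.
   If 2 ceil(log2 n) > D, the D coordinate parities x |-> x_c already do. *)

Section BooleanInnerProduct.

Variable D : nat.
Notation T := {ffun 'I_D -> bool}.

Definition bdot (a x : T) : nat := \sum_(i < D) (a i && x i).

Definition parity (a x : T) : bool := odd (bdot a x).

Lemma bdot_le a x : bdot a x <= D.
Proof.
rewrite -[leqRHS]card_ord -sum1_card; apply: leq_sum => i _.
by case: (_ && _).
Qed.

Lemma exists_coord_neq (x y : T) : x != y -> exists c, x c != y c.
Proof.
move=> neq_xy; apply/existsP; apply: contraR neq_xy => /existsPn eq_xy.
by apply/eqP/ffunP => i; apply/eqP/negPn.
Qed.

Definition flip (c : 'I_D) (a : T) : T := [ffun i => (i == c) (+) a i].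

Lemma flipK c : involutive (flip c).
Proof. by move=> a; apply/ffunP => i; rewrite !ffunE addKb. Qed.

Lemma parity_flip c a x : parity (flip c a) x = x c (+) parity a x.
Proof.
rewrite /parity /bdot [in LHS](bigD1 c) // [in RHS](bigD1 c) //= !oddD ffunE eqxx.
under eq_bigr => i /negbTE neq_ic do rewrite ffunE neq_ic addFb.
by case: (a c); case: (x c); rewrite ?addbA.
Qed.

Lemma card_parity_eq x y : x != y ->
  2 * #|[set a : T | parity a x == parity a y]| = 2 ^ D.
Proof.
move=> /exists_coord_neq[c neq_c]; set A := [set a | _].
have flipA : flip c @^-1: A = ~: A.
  apply/setP => a; rewrite !inE !parity_flip.
  by case: (x c) (y c) neq_c => [] [] //= _; case: (parity a x); case: (parity a y).
have := cardsC A; rewrite -flipA card_preimset; last exact: can_inj (flipK c).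
by rewrite card_ffun card_bool card_ord mul2n -addnn => ->.
Qed.

Definition unit_vec (j : nat) : T := [ffun i : 'I_D => val i == j].

Lemma parity_unit_vec (c : 'I_D) x : parity (unit_vec c) x = x c.
Proof.
rewrite /parity /bdot (bigD1 c) //= big1 => [|i neq_ic]; last first.
  by rewrite ffunE (inj_eq val_inj) (negbTE neq_ic).
by rewrite ffunE eqxx addn0 oddb.
Qed.

End BooleanInnerProduct.

Lemma sum_signr_ltn (R : pzRingType) (s m : nat) :
  (\sum_(t < m) (-1) ^+ t * (t < s)%:R = (odd (minn s m))%:R :> R)%R.
Proof.
elim: m => [|m IHm]; first by rewrite big_ord0 minn0.
rewrite big_ord_recr /= IHm; case: (ltnP m s) => [lt_ms | le_sm].
  rewrite (minn_idPr lt_ms) /= mulr1 -signr_odd.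
  by case: (odd m); rewrite ?addrN ?add0r.
by rewrite mulr0n mulr0 addr0 (minn_idPl (leqW le_sm)).
Qed.

Section MxvecUnindex.

Variables m n : nat.

Definition mxvec_unindex (k : 'I_(m * n)) : 'I_m * 'I_n :=
  enum_val (cast_ord (esym (mxvec_cast m n)) k).

Lemma mxvec_indexK i j : mxvec_unindex (mxvec_index i j) = (i, j).
Proof. by rewrite /mxvec_unindex cast_ordK enum_rankK. Qed.

Lemma sum_mxvec_index (V : nmodType) (F : 'I_(m * n) -> V) :
  (\sum_k F k = \sum_(i < m) \sum_(j < n) F (mxvec_index i j))%R.
Proof.
rewrite pair_bigA (reindex (fun p : 'I_m * 'I_n => mxvec_index p.1 p.2)) //=.
exists mxvec_unindex => [[i j] _ | k _]; first exact: mxvec_indexK.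
by case/mxvec_indexP: k => i j; rewrite mxvec_indexK.
Qed.

End MxvecUnindex.

Section ParityNetwork.

Variables D B : nat.
Notation T := {ffun 'I_D -> bool}.
Variable r : 'I_B -> T.

Local Open Scope ring_scope.

Definition atleast_gate (a : T) (t : nat) : thr_fun D :=
  ThrFun (fun i => (a i)%:R) t%:R.

Lemma eval_atleast_gate a t x : eval_thr (atleast_gate a t) x = (t <= bdot a x)%N.
Proof.
rewrite /eval_thr /= /bdot.
by under eq_bigr => i _ do rewrite -natrM mulnb; rewrite -natr_sum ler_nat.
Qed.

Definition parity_hidden : layer D (B * D) :=
  fun h => let: (b, t) := mxvec_unindex h in atleast_gate (r b) t.+1.

Definition parity_out {K : nat} : layer (B * D) K :=
  fun o : 'I_K => ThrFun (fun h => let: (b, t) := mxvec_unindex h in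
                            if val b == val o then (-1) ^+ t else 0) 1.

Definition parity_net {K : nat} : net3 D (B * D) K := Net3 parity_hidden parity_out.

Lemma eval_parity_hidden x b t :
  eval_layer parity_hidden x (mxvec_index b t) = (t < bdot (r b) x)%N.
Proof. by rewrite ffunE /parity_hidden mxvec_indexK eval_atleast_gate. Qed.

Lemma parity_netE K x (o : 'I_K) (b : 'I_B) :
  val o = val b -> net3_map parity_net x o = parity (r b) x.
Proof.
move=> ob; rewrite /net3_map ffunE /eval_thr /= sum_mxvec_index (bigD1 b) //=.
rewrite [X in _ + X]big1 => [|b' neq_b'b]; last first.
  apply: big1 => t _; rewrite mxvec_indexK ob (inj_eq val_inj) (negbTE neq_b'b).
  by rewrite mul0r.
under eq_bigr => t _ do rewrite mxvec_indexK ob eqxx eval_parity_hidden.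
by rewrite addr0 sum_signr_ltn (minn_idPl (bdot_le _ _)) ler1n lt0b.
Qed.

End ParityNetwork.

Section ParitySeparation.

Variable D : nat.
Notation T := {ffun 'I_D -> bool}.

Definition separates (r : nat -> T) (m : nat) (x y : T) : Prop :=
  exists2 j, j < m & parity (r j) x != parity (r j) y.

Lemma separates_unit_vec x y : x != y -> separates (@unit_vec D) D x y.
Proof. by move=> /exists_coord_neq[c neq_c]; exists c; rewrite ?parity_unit_vec. Qed.

Lemma sum_card_parity_eq (P : {set T * T}) :
  \sum_(a : T) #|[set p in P | parity a p.1 == parity a p.2]| =
  \sum_(p in P) #|[set a : T | parity a p.1 == parity a p.2]|.
Proof.
rewrite [LHS](eq_bigr (fun a => \sum_(p in P | parity a p.1 == parity a p.2) 1)).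
  rewrite (exchange_big_dep (mem P)) => [|a p _ /andP[] //].
  apply: eq_bigr => p Pp; rewrite sum1dep_card; apply: eq_card => a.
  by rewrite !inE (andb_idl (fun _ => Pp)).
by move=> a _; rewrite sum1dep_card.
Qed.

Lemma exists_halving_parity (P : {set T * T}) : {in P, forall p, p.1 != p.2} ->
  exists a, 2 * #|[set p in P | parity a p.1 == parity a p.2]| <= #|P|.
Proof.
move=> neqP; pose f a := #|[set p in P | parity a p.1 == parity a p.2]|.
have sum_f : \sum_a 2 * f a = 2 ^ D * #|P|.
  rewrite -big_distrr /= sum_card_parity_eq big_distrr /= mulnC -sum_nat_const.
  by apply: eq_bigr => p Pp; rewrite card_parity_eq ?neqP.
have [a0 _ min_a0] := arg_minnP f (isT : predT [ffun=> false]).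
exists a0; rewrite -(@leq_pmul2l (2 ^ D)) ?expn_gt0 // -sum_f.
have -> : 2 ^ D = #|T| by rewrite card_ffun card_bool card_ord.
by rewrite -sum_nat_const leq_sum // => a _; rewrite leq_mul2l min_a0 ?orbT.
Qed.

Lemma exists_separating_parities_pairs m (P : {set T * T}) :
  {in P, forall p, p.1 != p.2} -> #|P| < 2 ^ m ->
  exists r, {in P, forall p, separates r m p.1 p.2}.
Proof.
elim: m P => [|m IHm] P neqP.
  rewrite expn0 ltnS leqn0 => /eqP/cards0_eq ->.
  by exists (fun=> [ffun=> false]) => p; rewrite in_set0.
move=> card_P; have [a half_a] := exists_halving_parity neqP.
set P' := [set p in P | _] in half_a.
have neqP' : {in P', forall p, p.1 != p.2}.
  by move=> p; rewrite inE => /andP[/neqP].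
have card_P' : #|P'| < 2 ^ m.
  by rewrite -(ltn_pmul2l (isT : 0 < 2)) -expnS (leq_ltn_trans half_a).
have [r sep_r] := IHm P' neqP' card_P'.
exists (fun j => if j is j'.+1 then r j' else a) => p Pp.
have [eq_a | sep_a] := eqVneq (parity a p.1) (parity a p.2); last by exists 0.
have [|j lt_jm sep_j] := sep_r p; first by rewrite inE Pp eq_a eqxx.
by exists j.+1.
Qed.

Lemma exists_separating_parities (S : {set T}) k : #|S| <= 2 ^ k ->
  exists r, {in S &, forall x y, x != y -> separates r (minn (2 * k) D) x y}.
Proof.
move=> card_S; have [le_2k_D | lt_D_2k] := leqP (2 * k) D; last first.
  by exists (@unit_vec D) => x y _ _; apply: separates_unit_vec.
have [->|[x0 Sx0]] := set_0Vmem S.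
  by exists (fun=> [ffun=> false]) => x; rewrite in_set0.
pose P := [set p in setX S S | p.1 != p.2].
have neqP : {in P, forall p, p.1 != p.2} by move=> p; rewrite inE => /andP[].
have card_P : #|P| < 2 ^ (2 * k).
  have /proper_card : P \proper setX S S.
    apply/properP; split; first by apply/subsetP => p; rewrite inE => /andP[].
    by exists (x0, x0); rewrite !inE ?Sx0 ?eqxx.
  rewrite cardsX => /leq_trans; apply.
  by rewrite mul2n -addnn expnD leq_mul.
have [r sep_r] := exists_separating_parities_pairs neqP card_P.
by exists r => x y Sx Sy neq_xy; apply: (sep_r (x, y)); rewrite !inE Sx Sy.
Qed.

End ParitySeparation.

Theorem theorem9 (n D : nat) (hn : (1 <= n)%N) (hD : (1 <= D)%N)
  (X : 'I_n -> {ffun 'I_D -> bool}) (hX : injective X) :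
  exists N : net3 D (D * D) (2 * ceil_log2 n),
    forall i j : 'I_n, i != j -> net3_map N (X i) != net3_map N (X j).
Proof.
set k := ceil_log2 n.
have card_X : #|[set X i | i : 'I_n]| <= 2 ^ k.
  by rewrite (leq_trans (leq_imset_card _ _)) // card_ord up_logP.
have [r sep_r] := exists_separating_parities card_X.
pose N : net3 D (D * D) (2 * k) := parity_net (fun b : 'I_D => r b).
exists N => i j neq_ij.
have [o lt_o sep_o] : separates r (minn (2 * k) D) (X i) (X j).
  by apply: sep_r; rewrite ?imset_f ?(inj_eq hX).
have [lt_o_2k lt_o_D] : o < 2 * k /\ o < D by apply/andP; rewrite -leq_min.
have N_o x : net3_map N x (Ordinal lt_o_2k) = parity (r o) x.
  exact: (parity_netE _ _ (b := Ordinal lt_o_D)).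
by apply: contra sep_o => /eqP eq_N; rewrite -!N_o eq_N.
Qed.
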